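(* Let $\mathcal{A}$ be a finite or countable alphabet, $\mathcal{M}$ a countable set of probability measures on $\mathcal{A}^\infty$, $w:\mathcal{M}\to(0,1]$ a prior with $\sum_\nu w_\nu=1$, and $\xi$ the Bayes mixture. Let $\nu\in\mathcal{M}$ and let $I$ be a stopping interval. Then $$\mathbb{E}_\nu\sum_{t\in I}d_t(\nu,\xi)\le\sum_{x\in\mathcal{A}(I)}\nu(x)\left(\ln\frac1{w_\nu}+\ln\frac{\xi(x)}{\nu(x)}\right).$$
   Context: $\mathcal{A}^\infty$ carries the filtration $\mathcal{F}_{<t}:=\sigma(\{\Gamma_x:x\in\mathcal{A}^{t-1}\})$, $\Gamma_x=\{x\omega:\omega\in\mathcal{A}^\infty\}$; for a measure $\rho$, $\rho(x):=\rho(\Gamma_x)$, $\rho(y|x):=\rho(xy)/\rho(x)$. Bayes mixture $\xi(A):=\sum_\nu w_\nu\nu(A)$. Natural logs. $d_t(\nu,\xi)(\omega):=\sum_a\nu(a|\omega_{<t})\ln\frac{\nu(a|\omega_{<t})}{\xi(a|\omega_{<t})}$ with $\omega_{<t}=\omega_1\cdots\omega_{t-1}$. A stopping time is $t:\mathcal{A}^\infty\to\mathbb{N}\cup\{\infty\}$ with $t^{-1}(n)$ $\mathcal{F}_{<n}$-measurable for all $n$; for it, $\mathcal{A}(t):=\{x\in\mathcal{A}^*: t(x\omega)=\ell(x)+1\ \forall\omega\}$, $\ell(x)$ the length of $x$. If $t\le t'$ are stopping times, $I(\omega):=[t(\omega),t'(\omega))$ is a stopping interval and $\mathcal{A}(I):=\mathcal{A}(t)$.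 Terms with $\nu(x)=0$ in the right-hand sum are taken to be $0$. *)

From HB Require Import structures.
From mathcomp Require Import all_boot all_order all_algebra.
From mathcomp Require Import all_classical all_reals all_analysis.
Set Implicit Arguments. Unset Strict Implicit. Unset Printing Implicit Defensive.
Import Order.TTheory GRing.Theory Num.Theory.
Local Open Scope classical_set_scope.
Local Open Scope ring_scope.

Section Seqspace.
Variable A : pointedType.

(* A^oo is represented by nat -> A; omega = omega_1 omega_2 ... with
   omega_k stored at index k-1. *)

(* prefix omega n = omega_1 ... omega_n ;  omega_{<t} = prefix omega (t-1) *)
Definition prefix (w : nat -> A) (n : nat) : seq A := mkseq w n.

Definition cyl (x : seq A) : set (nat -> A) := [set w | prefix w (size x) = x].

Definition catw (x : seq A) (w : nat -> A) : nat -> A :=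
  fun n => if (n < size x)%N then nth (w 0) x n else w (n - size x)%N.

Definition cylinders : set (set (nat -> A)) := [set cyl x | x in setT].

Definition F_lt (n : nat) : set (set (nat -> A)) :=
  <<s [set cyl x | x in [set x : seq A | size x = n.-1]] >>.

End Seqspace.

Definition seqspace (A : pointedType) := g_sigma_algebraType (@cylinders A).

(* extended naturals N u {oo}: None = oo *)
Definition leo (a b : option nat) : bool :=
  match a, b with
  | _, None => true
  | None, Some _ => false
  | Some m, Some n => (m <= n)%N
  end.
Definition lto (a b : option nat) : bool :=
  match a, b with
  | None, _ => false
  | Some _, None => true
  | Some m, Some n => (m < n)%N
  end.

Definition stopping_time (A : pointedType) (t : (nat -> A) -> option nat) : Prop :=
  (forall w, t w <> Some 0%N) /\
  (forall n : nat, @F_lt A n (t @^-1` [set Some n])).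

Definition stop_words (A : pointedType) (t : (nat -> A) -> option nat) : set (seq A) :=
  [set x | forall w, t (catw x w) = Some (size x).+1].

Section Sums.
Variable R : realType.
Local Open Scope ereal_scope.

Definition csum (T : choiceType) (D : set T) (f : T -> \bar R) : \bar R :=
  \esum_(i in D) (f^\+ i) - \esum_(i in D) (f^\- i).
End Sums.

Section Mixture.
Variables (A : pointedType) (R : realType).
Local Notation T := (seqspace A).

Definition mixture (M : set (probability T R)) (w : probability T R -> R)
  (S : set T) : \bar R :=
  (\esum_(mu in M) ((w mu)%:E * mu S))%E.

Definition cylm (rho : set T -> \bar R) (x : seq A) : R := fine (rho (cyl x)).

Definition condm (rho : set T -> \bar R) (y x : seq A) : R :=
  cylm rho (x ++ y) / cylm rho x.

Definition dKL (nu xi : set T -> \bar R) (t : nat) (om : nat -> A) : \bar R :=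
  let x := prefix om t.-1 in
  csum [set: A] (fun a => (condm nu [:: a] x * ln (condm nu [:: a] x / condm xi [:: a] x))%:E).

Definition sum_interval (nu xi : set T -> \bar R)
  (t t' : (nat -> A) -> option nat) (om : nat -> A) : \bar R :=
  csum [set s : nat | leo (t om) (Some s) && lto (Some s) (t' om)]
       (fun s => dKL nu xi s om).

End Mixture.

(* Write [L(x) = ln (xi(x) / (w_nu nu(x)))]; it is nonnegative because
   [xi >= w_nu nu], and [nu(x) L(x)] is the summand on the right-hand side.
   At a node [z] with [nu(z) > 0] we have [L(z) - L(za) = ln (nu(a|z) / xi(a|z))],
   hence [nu(z) d(z) = sum_a nu(za) (L(z) - L(za))], while [ln u <= u - 1]
   gives [sum_a nu(za) L(za) <= nu(z) L(z)]; so both sums are finite and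
   [d(z) >= 0].  Telescoping over the levels of the subtree below a word [x]
   yields [sum_y nu(xy) d(xy) <= nu(x) L(x)].  Since [d_s(om)] depends only on
   [om_{<s}], the expectation of [sum_{s >= t} d_s] is at most the sum of these
   subtree sums over the stopping words [x]. *)

From HB Require Import structures.
From mathcomp Require Import all_boot all_order all_algebra.
From mathcomp Require Import all_classical all_reals all_analysis.
From mathcomp Require Import measurable_realfun zify ring lra.
Import Order.TTheory GRing.Theory Num.Theory.
Local Open Scope classical_set_scope.
Local Open Scope ring_scope.

Set Implicit Arguments. Unset Strict Implicit. Unset Printing Implicit Defensive.

Section esum_facts.
Local Open Scope ereal_scope.
Context {R : realType}.

Lemma ge0_subset_esum (T : choiceType) (I J : set T) (a : T -> \bar R) :
  I `<=` J -> (forall i, J i -> 0 <= a i) ->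
  \esum_(i in I) a i <= \esum_(i in J) a i.
Proof.
move=> IJ a0; apply: ge_ereal_sup => _ [X [finX XI] <-].
by apply: ereal_sup_ubound; exists X => //; split => //; exact: subset_trans XI IJ.
Qed.

Lemma ge0_esumZl (T : choiceType) (I : set T) (a : T -> \bar R) (c : R) :
  (0 <= c)%R -> (forall i, 0 <= a i) ->
  \esum_(i in I) (c%:E * a i) = c%:E * \esum_(i in I) a i.
Proof.
move=> c0 a0; rewrite /esum -ereal_supZl//; last first.
  by apply/set0P; exists 0; exists set0; [exact: fsets_set0|rewrite fsbig_set0].
congr ereal_sup; apply/seteqP; split => _ [X XI <-].
  by exists (\sum_(x \in X) a x); [exists X|rewrite ge0_mule_fsumr].
by move: XI => [X' XI' <-]; exists X' => //; rewrite ge0_mule_fsumr.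
Qed.

Lemma ge0_csumE (T : choiceType) (D : set T) (f : T -> \bar R) :
  (forall i, 0 <= f i) -> csum D f = \esum_(i in D) f i.
Proof.
move=> f0; rewrite /csum (@esum1 _ _ D (f^\-)) ?sube0.
  by apply: eq_esum => i _; rewrite funeposE max_l.
by move=> i _; rewrite funenegE max_r// oppe_le0.
Qed.

Lemma ge0_summable (T : choiceType) (D : set T) (f : T -> \bar R) :
  (forall i, D i -> 0 <= f i) -> \esum_(i in D) f i < +oo -> summable D f.
Proof. by move=> f0; rewrite /summable (eq_esum (fun i Di => gee0_abs (f0 i Di))). Qed.

Lemma esum_size_succ (T : choiceType) (g : seq T -> \bar R) n :
  (forall s, 0 <= g s) ->
  \esum_(s in [set s : seq T | size s = n.+1]) g s =
  \esum_(s in [set s : seq T | size s = n]) \esum_(a in [set: T]) g (s ++ [:: a]).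
Proof.
move=> g0; rewrite (@esum_esum _ _ _ _ (fun=> [set: T]) (fun s a => g (s ++ [:: a])))//.
apply: reindex_esum; split.
- by move=> [s a] [/= sn _] /=; rewrite size_cat sn addn1.
- move=> [s1 a1] [s2 a2] _ _ /= /eqP; rewrite !cats1 eqseq_rcons.
  by move=> /andP[/eqP-> /eqP->].
- move=> s' /=; case/lastP: s' => [//|s a]; rewrite size_rcons => -[sn].
  by exists (s, a) => //=; rewrite cats1.
Qed.

Lemma countable_set_bij (T : pointedType) (J : set T) : countable J ->
  exists (e : nat -> T) (P : set nat), set_bij P J e.
Proof.
by move=> /countable_bijP[B /card_esym /card_set_bijP[f fb]]; exists f, B.
Qed.

Lemma esum_nneseries (T : choiceType) (P : set nat) (J : set T) (e : nat -> T)
    (a : T -> \bar R) : set_bij P J e -> (forall j, J j -> 0 <= a j) ->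
  \esum_(j in J) a j = \sum_(n <oo) (if n \in P then a (e n) else 0).
Proof.
move=> eb a0; rewrite (reindex_esum P J e a)// -(set_mem_set P).
rewrite -nneseries_esum ?eseries_mkcond ?set_mem_set// => n.
by rewrite inE => Pn; apply: a0; case: eb => + _ _; apply.
Qed.

Lemma ge0_integral_esum d (T : measurableType d) (mu : measure T R)
   (U : pointedType) (J : set U) (h : U -> T -> \bar R) : countable J ->
  (forall j, J j -> measurable_fun [set: T] (h j)) ->
  (forall j x, J j -> 0 <= h j x) ->
  \int[mu]_x (\esum_(j in J) h j x) = \esum_(j in J) \int[mu]_x h j x.
Proof.
move=> /countable_set_bij[e [P eb]] mh h0.
have eJ n : n \in P -> J (e n) by rewrite inE; case: eb => + _ _; apply.
under eq_integral => x _ do rewrite (esum_nneseries eb (fun j Jj => h0 j x Jj)).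
rewrite integral_nneseries//; last 2 first.
- move=> n; case: (boolP (n \in P)) => [/eJ/mh//|_]; exact: measurable_cst.
- by move=> n x _; case: (boolP (n \in P)) => // /eJ Je; exact: h0.
rewrite (esum_nneseries eb); last first.
  by move=> j Jj; apply: integral_ge0 => x _; exact: h0.
apply: eq_eseriesr => n _; case: (boolP (n \in P)) => // _; exact: integral0.
Qed.

(* No measurability is needed: the integral of a nonnegative function is the
   supremum of the integrals of the simple functions below it. *)
Lemma le_ge0_integral d (T : measurableType d) (mu : measure T R)
  (f g : T -> \bar R) : (forall x, 0 <= f x) -> (forall x, f x <= g x) ->
  \int[mu]_x f x <= \int[mu]_x g x.
Proof.
move=> f0 fg; rewrite !ge0_integralE//; last by move=> x _; exact: le_trans (fg x).
rewrite !patch_setT; apply: ereal_sup_le => _ [h hf <-]; exists h => //.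
by move=> x; apply: le_trans (hf x) (fg x).
Qed.

End esum_facts.

Lemma ln_le_subr1 {R : realType} (u : R) : 0 < u -> ln u <= u - 1.
Proof.
by move=> u0; have := @le_ln1Dx R (u - 1); rewrite addrCA subrr addr0; apply; lra.
Qed.

Section words.
Variable A : pointedType.
Implicit Types (x y : seq A) (om : nat -> A).

Lemma size_prefix om n : size (prefix om n) = n.
Proof. exact: size_mkseq. Qed.

Lemma prefix_catw x om : prefix (catw x om) (size x) = x.
Proof.
apply: (@eq_from_nth _ (om 0%N)); rewrite size_prefix// => i Hi.
by rewrite nth_mkseq// /catw Hi.
Qed.

Lemma take_prefix m n om : (m <= n)%N -> take m (prefix om n) = prefix om m.
Proof.
move=> mn; apply: (@eq_from_nth _ (om 0%N)).
  by rewrite size_take !size_prefix; case: ifP => //; lia.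
move=> i; rewrite size_take size_prefix => Hi.
have im : (i < m)%N by move: Hi; case: ifP => //; lia.
by rewrite nth_take// !nth_mkseq//; lia.
Qed.

Lemma cyl_prefix om n : cyl (prefix om n) om.
Proof. by rewrite /cyl/= size_prefix. Qed.

Lemma cyl_rcons x a om : cyl (x ++ [:: a]) om <-> cyl x om /\ om (size x) = a.
Proof.
rewrite /cyl/= size_cat/= addn1 /prefix mkseqS cats1 -/(prefix om _); split.
  by move=> /eqP; rewrite eqseq_rcons => /andP[/eqP-> /eqP->].
by move=> [-> ->].
Qed.

Lemma measurable_cyl x : measurable (cyl x : set (seqspace A)).
Proof. by apply: sub_gen_smallest; exists x. Qed.

Lemma F_lt_prefix n (S : set (nat -> A)) : F_lt n S ->
  forall om om', prefix om n.-1 = prefix om' n.-1 -> S om -> S om'.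
Proof.
pose Sat := [set S : set (nat -> A) |
  forall om om', prefix om n.-1 = prefix om' n.-1 -> S om -> S om'].
move=> FS; suff : Sat S by [].
apply: (smallest_sub _ _ FS); last first.
  by move=> _ [x /= xn <-] om om' e; rewrite /cyl/= xn => <-.
split.
- by move=> om om' _.
- move=> B SB om om' e [_ nB]; split => // Bom'; apply: nB.
  exact: (SB om' om (esym e) Bom').
- by move=> B SB om om' e [k _ Bk]; exists k => //; exact: (SB k om om' e).
Qed.

Lemma countable_seq (S : set (seq A)) : countable [set: A] -> countable S.
Proof.
move=> /countable_injP[f finj]; apply/countable_injP.
exists (fun s => pickle (map f s)) => s1 s2 _ _ /(pcan_inj pickleK).
elim: s1 s2 => [|a s1 IH] [|b s2] //= [fab /IH ->]//.
by rewrite (finj a b)// inE.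
Qed.

Lemma stopping_time_prefix (t : (nat -> A) -> option nat) om n :
  stopping_time t -> t om = Some n ->
  (0 < n)%N /\ stop_words t (prefix om n.-1).
Proof.
move=> [t0 tF] tn; have n0 : (0 < n)%N by case: n tn => // /t0.
split => // w0; rewrite size_prefix prednK//.
apply: (F_lt_prefix (tF n) _ tn).
by have := prefix_catw (prefix om n.-1) w0; rewrite size_prefix => ->.
Qed.

End words.

Lemma measure_cyl_rcons (A : pointedType) (R : realType) (hA : countable [set: A])
    (mu : measure (seqspace A) R) z :
  (mu (cyl z) = \esum_(a in [set: A]) mu (cyl (z ++ [:: a])))%E.
Proof.
have [e [P eb]] := countable_set_bij hA.
rewrite (esum_nneseries eb)// -eseries_mkcond.
have -> : cyl z = \bigcup_(n in P) cyl (z ++ [:: e n]).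
  apply/seteqP; split => om; last by move=> [n _ /cyl_rcons[]].
  move=> zom; have [n Pn en] := set_bij_surj eb (I : [set: A] (om (size z))).
  by exists n => //; apply/cyl_rcons.
rewrite measure_bigcup//; first by move=> i _; exact: measurable_cyl.
move=> i j Pi Pj [om [/cyl_rcons[_ ei] /cyl_rcons[_ ej]]].
by case: eb => _ + _; apply; rewrite ?inE//; exact: (etrans (esym ei) ej).
Qed.

(* [stopped_dkl] below sums over pairs of words, and [ge0_integral_esum]
   needs a pointed index type. *)
HB.instance Definition _ (T : choiceType) := isPointed.Build (seq T) [::].

Section mixture_cylinders.
Variables (A : pointedType) (R : realType).
Hypothesis hA : countable [set: A].
Local Notation T := (seqspace A).
Variables (M : set (probability T R)) (w : probability T R -> R).
Hypothesis hw : forall mu, M mu -> 0 < w mu <= 1.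
Hypothesis hw1 : (\esum_(mu in M) (w mu)%:E = 1)%E.
Variables (nu : probability T R).
Hypothesis hnu : M nu.
Local Notation xi := (mixture M w).
Local Notation p := (cylm nu).
Local Notation q := (cylm xi).

Let w_ge0 mu : M mu -> 0 <= w mu.
Proof. by move=> /hw /andP[/ltW]. Qed.

Lemma w_nu_gt0 : 0 < w nu.
Proof. by have /andP[] := hw hnu. Qed.
Local Hint Resolve w_nu_gt0 : core.

Local Open Scope ereal_scope.

Lemma mixture_ge0 S : 0 <= xi S.
Proof. by apply: esum_ge0 => mu Mmu; rewrite mule_ge0// lee_fin w_ge0. Qed.

Lemma mixture_le1 S : measurable S -> xi S <= 1.
Proof.
move=> mS; rewrite -hw1; apply: le_esum => mu Mmu.
by rewrite -[leRHS]mule1 lee_wpmul2l ?lee_fin ?w_ge0// probability_le1.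
Qed.

Lemma mixture_ge S : (w nu)%:E * nu S <= xi S.
Proof.
apply: esum_ge; exists [set nu]; last by rewrite fsbig_set1.
by split; [exact: finite_set1|move=> ? ->].
Qed.

Lemma mixture_cyl_rcons z :
  xi (cyl z) = \esum_(a in [set: A]) xi (cyl (z ++ [:: a])).
Proof.
have wmu0 mu a : M mu -> 0 <= (w mu)%:E * mu (cyl (z ++ [:: a])).
  by move=> Mmu; rewrite mule_ge0// lee_fin w_ge0.
rewrite [RHS]esum_esum; last by move=> a mu _; exact: wmu0.
rewrite (reindex_esum (M `*`` (fun=> [set: A])) _ (fun k => (k.2, k.1))); last first.
  split.
  - by move=> [mu a] [/= Mmu _].
  - by move=> [mu1 a1] [mu2 a2] _ _ /= [-> ->].
  - by move=> [a mu] [_ /= Mmu]; exists (mu, a).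
rewrite /= -(@esum_esum _ _ _ M (fun=> [set: A])
  (fun mu a => (w mu)%:E * mu (cyl (z ++ [:: a])))); last first.
  by move=> mu a Mmu _; exact: wmu0.
apply: eq_esum => mu Mmu /=.
by rewrite ge0_esumZl ?w_ge0// -measure_cyl_rcons.
Qed.

Lemma cylm_probabilityE z : (p z)%:E = nu (cyl z).
Proof.
rewrite fineK// ge0_fin_numE//.
by rewrite (le_lt_trans (probability_le1 _ (measurable_cyl z)))// ltey.
Qed.

Lemma cylm_mixtureE z : (q z)%:E = xi (cyl z).
Proof.
rewrite fineK// ge0_fin_numE ?mixture_ge0//.
by rewrite (le_lt_trans (mixture_le1 (measurable_cyl z)))// ltey.
Qed.

Local Close Scope ereal_scope.

Lemma cylm_probability_ge0 z : 0 <= p z.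
Proof. by rewrite -lee_fin cylm_probabilityE. Qed.

Lemma cylm_mixture_ge0 z : 0 <= q z.
Proof. by rewrite -lee_fin cylm_mixtureE mixture_ge0. Qed.
Local Hint Resolve cylm_probability_ge0 cylm_mixture_ge0 : core.

Lemma cylm_mixture_ge z : w nu * p z <= q z.
Proof. by rewrite -lee_fin EFinM cylm_probabilityE cylm_mixtureE mixture_ge. Qed.

Lemma cylm_mixture_gt0 z : 0 < p z -> 0 < q z.
Proof.
by move=> pz; apply: lt_le_trans (cylm_mixture_ge z); rewrite mulr_gt0.
Qed.

Lemma cylm_probability_rcons z :
  (p z)%:E = (\esum_(a in [set: A]) (p (z ++ [:: a]))%:E)%E.
Proof.
rewrite cylm_probabilityE (measure_cyl_rcons hA).
by apply: eq_esum => a _; rewrite cylm_probabilityE.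
Qed.

Lemma cylm_mixture_rcons z :
  (q z)%:E = (\esum_(a in [set: A]) (q (z ++ [:: a]))%:E)%E.
Proof.
rewrite cylm_mixtureE mixture_cyl_rcons.
by apply: eq_esum => a _; rewrite cylm_mixtureE.
Qed.

Lemma cylm_probability_rcons_le z a : p (z ++ [:: a]) <= p z.
Proof.
rewrite -lee_fin !cylm_probabilityE le_measure ?inE//; try exact: measurable_cyl.
by move=> om /cyl_rcons[].
Qed.

Definition logratio z := ln (q z / (w nu * p z)).

Definition dkl z := csum [set: A] (fun a =>
  (condm nu [:: a] z * ln (condm nu [:: a] z / condm xi [:: a] z))%:E).

Definition children_logratio z :=
  (\esum_(a in [set: A]) (p (z ++ [:: a]) * logratio (z ++ [:: a]))%:E)%E.

Lemma cylm_probability_eq0_or_gt0 z : p z = 0 \/ 0 < p z.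
Proof.
by have := cylm_probability_ge0 z; rewrite le0r => /orP[/eqP|]; [left|right].
Qed.

Lemma cylm_probability_rcons_eq0 z a : p z = 0 -> p (z ++ [:: a]) = 0.
Proof.
move=> pz0; apply/le_anti; rewrite cylm_probability_ge0 andbT -pz0.
exact: cylm_probability_rcons_le.
Qed.

Lemma cylm_probability_rcons_mulr z c : 0 <= c ->
  (\esum_(a in [set: A]) (p (z ++ [:: a]) * c)%:E = (p z * c)%:E)%E.
Proof.
move=> c0; under eq_esum => a _ do rewrite mulrC EFinM.
rewrite ge0_esumZl//; last by move=> a; rewrite lee_fin cylm_probability_ge0.
by rewrite -cylm_probability_rcons -EFinM mulrC.
Qed.

Lemma logratio_ge0 z : 0 < p z -> 0 <= logratio z.
Proof.
move=> pz; rewrite ln_ge0// ler_pdivlMr ?mulr_gt0// mul1r.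
exact: cylm_mixture_ge.
Qed.

Lemma logratioE z : 0 < p z -> logratio z = ln (1 / w nu) + ln (q z / p z).
Proof.
move=> pz; have qz := cylm_mixture_gt0 pz.
by rewrite /logratio -lnM ?posrE ?divr_gt0//; congr ln; field; rewrite !gt_eqF.
Qed.

Lemma mul_logratio_ge0 z : 0 <= p z * logratio z.
Proof.
have [->|pz] := cylm_probability_eq0_or_gt0 z; first by rewrite mul0r.
by rewrite mulr_ge0 ?logratio_ge0.
Qed.

Lemma dkl_summandE z a : 0 < p z ->
  condm nu [:: a] z * ln (condm nu [:: a] z / condm xi [:: a] z) =
  p (z ++ [:: a]) * (logratio z - logratio (z ++ [:: a])) / p z.
Proof.
move=> pz; rewrite /condm /logratio.
have [->|pa] := cylm_probability_eq0_or_gt0 (z ++ [:: a]); first by rewrite !mul0r.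
have qz := cylm_mixture_gt0 pz; have qa := cylm_mixture_gt0 pa.
rewrite -ln_div ?posrE ?divr_gt0 ?mulr_gt0// [RHS]mulrAC; congr (_ * ln _).
by field; rewrite !gt_eqF.
Qed.

(* [ln u <= u - 1] with [u = q(za) p(z) / (p(za) q(z))], the ratio of the
   conditional probabilities of [a] under [xi] and [nu]. *)
Lemma logratio_rcons_le z a : 0 < p z ->
  p (z ++ [:: a]) * logratio (z ++ [:: a]) <=
  p (z ++ [:: a]) * logratio z + p z / q z * q (z ++ [:: a]) - p (z ++ [:: a]).
Proof.
move=> pz; have qz := cylm_mixture_gt0 pz.
have [->|pa] := cylm_probability_eq0_or_gt0 (z ++ [:: a]).
  by rewrite !mul0r !add0r subr0 mulr_ge0 ?divr_ge0 ?cylm_mixture_ge0.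
have qa := cylm_mixture_gt0 pa; rewrite /logratio.
set P := p z; set Q := q z; set pa' := p _; set qa' := q _.
have u0 : 0 < qa' * P / (pa' * Q) by rewrite divr_gt0 ?mulr_gt0.
have -> : qa' / (w nu * pa') = Q / (w nu * P) * (qa' * P / (pa' * Q)).
  by field; rewrite !gt_eqF.
have -> : P / Q * qa' = pa' * (qa' * P / (pa' * Q)) by field; rewrite !gt_eqF.
rewrite lnM ?posrE ?divr_gt0 ?mulr_gt0// mulrDr -addrA lerD2l.
by rewrite -[X in _ - X]mulr1 -mulrBr ler_pM2l// ln_le_subr1.
Qed.

Local Open Scope ereal_scope.

Lemma children_logratio_ge0 z : 0 <= children_logratio z.
Proof. by apply: esum_ge0 => a _; rewrite lee_fin mul_logratio_ge0. Qed.

Lemma children_logratio_le z : children_logratio z <= (p z * logratio z)%:E.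
Proof.
have [pz0|pz] := cylm_probability_eq0_or_gt0 z.
  rewrite pz0 mul0r /children_logratio esum1// => a _.
  by rewrite cylm_probability_rcons_eq0// mul0r.
have qz := cylm_mixture_gt0 pz.
have : \esum_(a in [set: A])
           ((p (z ++ [:: a]) * logratio (z ++ [:: a]))%:E + (p (z ++ [:: a]))%:E)
       <= \esum_(a in [set: A])
           ((p (z ++ [:: a]) * logratio z)%:E + (p z / q z)%:E * (q (z ++ [:: a]))%:E).
  apply: le_esum => a _; rewrite -EFinM -!EFinD lee_fin.
  by have := logratio_rcons_le a pz; lra.
rewrite !esumD; last 4 first.
- by move=> a _; rewrite lee_fin mulr_ge0 ?logratio_ge0.
- by move=> a _; rewrite mule_ge0// lee_fin ?cylm_mixture_ge0// divr_ge0.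
- by move=> a _; rewrite lee_fin mul_logratio_ge0.
- by move=> a _; rewrite lee_fin.
rewrite -cylm_probability_rcons ge0_esumZl ?divr_ge0//; last first.
  by move=> a; rewrite lee_fin cylm_mixture_ge0.
rewrite -cylm_mixture_rcons -EFinM divfK ?gt_eqF//.
by rewrite cylm_probability_rcons_mulr ?logratio_ge0// leeD2rE.
Qed.

Lemma children_logratio_fin z : children_logratio z \is a fin_num.
Proof.
rewrite ge0_fin_numE ?children_logratio_ge0//.
by rewrite (le_lt_trans (children_logratio_le z)) ?ltey.
Qed.

Lemma dkl_eq0 z : (p z = 0)%R -> dkl z = 0.
Proof.
move=> pz0; rewrite /dkl (_ : (fun a => _) = fun=> 0); last first.
  by apply/funext => a; rewrite /condm pz0 invr0 !mulr0 mul0r.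
by rewrite ge0_csumE// esum1.
Qed.

Lemma dklE z : (0 < p z)%R ->
  dkl z = (logratio z - fine (children_logratio z) / p z)%:E.
Proof.
move=> pz; have L0 := logratio_ge0 pz.
set f := fun a => (p (z ++ [:: a]) * (logratio z / p z))%:E.
set g := fun a => ((p z)^-1 * (p (z ++ [:: a]) * logratio (z ++ [:: a])))%:E.
have f0 a : 0 <= f a by rewrite lee_fin mulr_ge0 ?divr_ge0.
have g0 a : 0 <= g a by rewrite lee_fin mulr_ge0 ?invr_ge0 ?mul_logratio_ge0.
have Ef : \esum_(a in [set: A]) f a = (logratio z)%:E.
  by rewrite cylm_probability_rcons_mulr ?divr_ge0// mulrC divfK ?gt_eqF.
have Eg : \esum_(a in [set: A]) g a = (p z)^-1%:E * children_logratio z.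
  rewrite /children_logratio -ge0_esumZl ?invr_ge0// => a.
  by rewrite lee_fin mul_logratio_ge0.
rewrite /dkl (_ : (fun a => _) = f \- g); last first.
  apply/funext => a; rewrite dkl_summandE// /f /g -EFinB.
  by congr EFin; field; rewrite gt_eqF.
have Ffin := children_logratio_fin z.
have sf : summable [set: A] f.
  by apply: ge0_summable => [a _|]; [exact: f0|rewrite Ef ltey].
have sg : summable [set: A] g.
  by apply: ge0_summable => [a _|]; [exact: g0|rewrite Eg -(fineK Ffin) ltey].
rewrite /csum (esumB sf sg); [|by move=> a _; exact: f0|by move=> a _; exact: g0].
by rewrite Ef Eg -(fineK Ffin) -EFinM -EFinB mulrC.
Qed.

Lemma dkl_ge0 z : 0 <= dkl z.
Proof.
have [pz0|pz] := cylm_probability_eq0_or_gt0 z; first by rewrite dkl_eq0.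
rewrite dklE// lee_fin subr_ge0 ler_pdivrMr// mulrC -lee_fin.
by rewrite fineK ?children_logratio_fin ?children_logratio_le.
Qed.

Lemma dkl_balance z :
  (p z)%:E * dkl z + children_logratio z = (p z * logratio z)%:E.
Proof.
have [pz0|pz] := cylm_probability_eq0_or_gt0 z.
  rewrite dkl_eq0// pz0 mule0 add0e mul0r /children_logratio esum1// => a _.
  by rewrite cylm_probability_rcons_eq0// mul0r.
rewrite dklE// -[X in _ + X](fineK (children_logratio_fin z)) -EFinM -EFinD.
by congr EFin; field; rewrite gt_eqF.
Qed.

Lemma tree_level_balance x K :
  \esum_(y in [set y : seq A | (size y < K)%N]) (p (x ++ y))%:E * dkl (x ++ y) +
  \esum_(y in [set y : seq A | size y = K]) (p (x ++ y) * logratio (x ++ y))%:E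
  = (p x * logratio x)%:E.
Proof.
elim: K => [|K IH].
  rewrite (_ : [set y : seq A | (size y < 0)%N] = set0); last by apply/seteqP; split.
  rewrite (_ : [set y : seq A | size y = 0%N] = [set [::]]); last first.
    by apply/seteqP; split => y /=; [move/size0nil|move=> ->].
  by rewrite esum_set0 esum_set1 ?lee_fin ?mul_logratio_ge0// cats0 add0e.
have pd_ge0 y : 0 <= (p (x ++ y))%:E * dkl (x ++ y).
  by rewrite mule_ge0 ?lee_fin ?dkl_ge0.
rewrite (esumID [set y : seq A | size y = K]); last by move=> y _; exact: pd_ge0.
rewrite (_ : _ `&` _ = [set y | size y = K]); last first.
  by apply/seteqP; split => y /=; [case|move=> yK; split=> //; rewrite yK].
rewrite (_ : _ `&` _ = [set y | (size y < K)%N]); last first.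
  apply/seteqP; split => y /=; first by case; rewrite ltnS leq_eqVlt => /orP[/eqP|].
  by move=> yK; split; [exact: ltnW|move=> e; rewrite e ltnn in yK].
rewrite esum_size_succ; last by move=> y; rewrite lee_fin mul_logratio_ge0.
rewrite [X in X + _]addeC -addeA -esumD; last 2 first.
- by move=> y _; exact: pd_ge0.
- by move=> y _; apply: esum_ge0 => a _; rewrite lee_fin mul_logratio_ge0.
rewrite -[RHS]IH; congr (_ + _); apply: eq_esum => y _.
by rewrite -dkl_balance; congr (_ + _); apply: eq_esum => a _; rewrite catA.
Qed.

Lemma subtree_dkl_le x :
  \esum_(y in [set: seq A]) (p (x ++ y))%:E * dkl (x ++ y) <= (p x * logratio x)%:E.
Proof.
apply: ge_ereal_sup => _ [Y [finY _] <-].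
pose K := (\max_(y <- finmap.enum_fset (fset_set Y)) size y).+1.
have last_level_ge0 :
    0 <= \esum_(y in [set y : seq A | size y = K]) (p (x ++ y) * logratio (x ++ y))%:E.
  by apply: esum_ge0 => y _; rewrite lee_fin mul_logratio_ge0.
rewrite -(tree_level_balance x K); apply: (le_trans _ (leeDl _ last_level_ge0)).
apply: esum_ge; exists Y => //; split => // y Yy /=.
by rewrite /K ltnS (leq_bigmax_seq y)// in_fset_set// inE.
Qed.

Lemma integral_dkl_indic z :
  \int[nu]_om (dkl z * (\1_(cyl z) om)%:E) = (p z)%:E * dkl z.
Proof.
have mI : measurable_fun [set: T] (fun om => (\1_(cyl z) om)%:E : \bar R).
  by apply/measurable_EFinP; exact: measurable_indic (measurable_cyl _).
have mC := measurable_cyl z.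
by rewrite ge0_integralZl ?dkl_ge0// integral_indic// setIT cylm_probabilityE muleC.
Qed.

Variables t t' : (nat -> A) -> option nat.
Hypothesis ht : stopping_time t.

(* A pair [(x, y)] is a stopping word [x] with an extension [y]; on [cyl (x ++ y)]
   the summand is [d_s] for [s = size (x ++ y) + 1 >= t om]. *)
Definition stopped_dkl om :=
  \esum_(j in stop_words t `*`` (fun=> [set: seq A]))
    dkl (j.1 ++ j.2) * (\1_(cyl (j.1 ++ j.2)) om)%:E.

Lemma sum_interval_le_stopped_dkl om : sum_interval nu xi t t' om <= stopped_dkl om.
Proof.
have summand_ge0 j : 0 <= dkl (j.1 ++ j.2) * (\1_(cyl (j.1 ++ j.2)) om)%:E.
  by rewrite mule_ge0 ?dkl_ge0// lee_fin indicE.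
rewrite /sum_interval ge0_csumE; last by move=> s; exact: dkl_ge0.
case tom : (t om) => [n|]; last first.
  rewrite (_ : [set s | _] = set0) ?esum_set0; last by apply/seteqP; split.
  by apply: esum_ge0 => j _; exact: summand_ge0.
have [n0 stop_n] := stopping_time_prefix ht tom.
set I := [set s | _].
pose e s := (prefix om n.-1, drop n.-1 (prefix om s.-1)).
have In s : I s -> (n <= s)%N by rewrite /I/= => /andP[].
have eE s : I s -> (e s).1 ++ (e s).2 = prefix om s.-1.
  move=> /In ns; rewrite /= -(take_prefix om (_ : n.-1 <= s.-1)%N) ?cat_take_drop//.
  by lia.
have einj : set_inj I e.
  move=> s1 s2 /set_mem /In n1 /set_mem /In n2 [] /(congr1 size).
  by rewrite !size_drop !size_prefix; lia.
apply: (@le_trans _ _ (\esum_(j in e @` I) (dkl (j.1 ++ j.2) *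
                         (\1_(cyl (j.1 ++ j.2)) om)%:E))).
  rewrite esum_image//; apply: le_esum => s Is.
  rewrite eE// indicE mem_set; last exact: cyl_prefix.
  by rewrite /= mulr1n mule1.
apply: ge0_subset_esum; first by move=> _ [s Is <-]; split.
by move=> j _; exact: summand_ge0.
Qed.

Lemma integral_stopped_dkl_le :
  \int[nu]_om stopped_dkl om <= \esum_(x in stop_words t) (p x * logratio x)%:E.
Proof.
have summand_ge0 j om : 0 <= dkl (j.1 ++ j.2) * (\1_(cyl (j.1 ++ j.2)) om)%:E.
  by rewrite mule_ge0 ?dkl_ge0// lee_fin indicE.
rewrite /stopped_dkl (@ge0_integral_esum _ _ _ nu _
  (stop_words t `*`` (fun=> [set: seq A]))
  (fun j om => dkl (j.1 ++ j.2) * (\1_(cyl (j.1 ++ j.2)) om)%:E)); last 3 first.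
- exact: countableXR (countable_seq _ hA) (fun _ _ => countable_seq _ hA).
- move=> j _; apply: measurable_funeM; apply/measurable_EFinP.
  exact: measurable_indic (measurable_cyl _).
- by move=> j om _; exact: summand_ge0.
rewrite -(@esum_esum _ _ _ (stop_words t) (fun=> [set: seq A])
  (fun x y => \int[nu]_om (dkl (x ++ y) * (\1_(cyl (x ++ y)) om)%:E))); last first.
  by move=> x y _ _; apply: integral_ge0 => om _; exact: (summand_ge0 (x, y)).
apply: le_esum => x _; under eq_esum => y _ do rewrite integral_dkl_indic.
exact: subtree_dkl_le.
Qed.

End mixture_cylinders.

Theorem lemma5 (A : pointedType) (R : realType)
  (hA : countable [set: A])
  (M : set (probability (seqspace A) R)) (hM : countable M)
  (w : probability (seqspace A) R -> R)
  (hw : forall mu, M mu -> 0 < w mu <= 1)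
  (hw1 : (\esum_(mu in M) (w mu)%:E = 1)%E)
  (nu : probability (seqspace A) R) (hnu : M nu)
  (t t' : (nat -> A) -> option nat)
  (ht : stopping_time t) (ht' : stopping_time t')
  (htt' : forall om, leo (t om) (t' om)) :
  let xi := mixture M w in
  (\int[nu]_om sum_interval nu xi t t' om <=
   csum (stop_words t)
     (fun x => if cylm nu x == 0%R then 0%E
               else (cylm nu x * (ln (1 / w nu) + ln (cylm xi x / cylm nu x)))%:E))%E.
Proof.
cbv zeta; set xi := mixture M w; have dkl_ge0 := dkl_ge0 hA hw hw1 hnu.
have summandE x : (if cylm nu x == 0 then 0%E
    else (cylm nu x * (ln (1 / w nu) + ln (cylm xi x / cylm nu x)))%:E) =
    (cylm nu x * logratio M w nu x)%:E.
  have [->|px] := cylm_probability_eq0_or_gt0 nu x; first by rewrite eqxx mul0r.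
  by rewrite gt_eqF// (logratioE hw hw1 hnu px).
have sum_ge0 om : (0 <= sum_interval nu xi t t' om)%E.
  by rewrite /sum_interval ge0_csumE => [|s]; [apply: esum_ge0 => s _|]; exact: dkl_ge0.
apply: le_trans (le_ge0_integral nu sum_ge0
  (sum_interval_le_stopped_dkl hA hw hw1 hnu t' ht)) _.
apply: le_trans (integral_stopped_dkl_le hA hw hw1 hnu t) _.
rewrite ge0_csumE => [|x]; last first.
  by rewrite summandE lee_fin (mul_logratio_ge0 hw hw1 hnu).
by apply: le_esum => x _; rewrite summandE.
Qed.
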